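(* Assume $c_1>c_2>0$ and $\sigma_0\sigma_1\neq0$. Let $\delta>0$ be sufficiently small, and let $\Phi\in B^6_{2\delta}(0)$ with $\phi_2^2+\phi_3^2>0$. Then the following identities hold. - For $i\in\{1,6\}$: $\gamma^i_{23}+\gamma^i_{32}=0$ and $\gamma^i_{45}+\gamma^i_{54}=0$. - For $i=3$: $-c^3_{32}+\gamma^3_{32}=0$ and $\gamma^3_{45}+\gamma^3_{54}=0$. - For $i=4$: $-c^4_{45}+\gamma^4_{45}=0$ and $\gamma^4_{23}+\gamma^4_{32}=0$. In other words, in the decomposed equations for $w^1,w^3,w^4,w^6$ the terms $w^2w^3$ and $w^4w^5$ do not appear. Moreover, there is a constant $C$ such that each of the four quantities $$-c^2_{23}+\gamma^2_{23},\qquad \gamma^2_{45}+\gamma^2_{54},\qquad -c^5_{54}+\gamma^5_{54},\qquad \gamma^5_{23}+\gamma^5_{32}$$ has absolute value at most $C|\lambda_2(\Phi)-\lambda_3(\Phi)|$ on this set. That is, in the equations for $w^2,w^5$ the coefficients of $w^2w^3$ and $w^4w^5$ carry a factor $\lambda_2-\lambda_3$.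
   Context: Set $$a=c_1^2+2\sigma_0\phi_1,\quad b=c_2^2+2\sigma_1\phi_1,\quad c=2\sigma_1\phi_2,\quad d=2\sigma_1\phi_3,\quad \Delta=(a-b)^2+4(c^2+d^2).$$ Eigenvalues: $$\lambda_1=-\lambda_6=\sqrt{\tfrac12(a+b)+\tfrac12\sqrt\Delta},\qquad\lambda_2=-\lambda_5=\sqrt b,\qquad\lambda_3=-\lambda_4=\sqrt{\tfrac12(a+b)-\tfrac12\sqrt\Delta}.$$ Right eigenvectors (column vectors): $$r_1=\big(\tfrac{\lambda_1^2-b}{2\sigma_1},\phi_2,\phi_3,-\tfrac{\lambda_1(\lambda_1^2-b)}{2\sigma_1},-\lambda_1\phi_2,-\lambda_1\phi_3\big),$$ $$r_2=(0,\phi_3,-\phi_2,0,-\lambda_2\phi_3,\lambda_2\phi_2),$$ $$r_3=\big(\tfrac{\lambda_3^2-b}{2\sigma_1},\phi_2,\phi_3,-\tfrac{\lambda_3(\lambda_3^2-b)}{2\sigma_1},-\lambda_3\phi_2,-\lambda_3\phi_3\big),$$ $$r_4=\big(\tfrac{\lambda_3^2-b}{2\sigma_1},\phi_2,\phi_3,\tfrac{\lambda_3(\lambda_3^2-b)}{2\sigma_1},\lambda_3\phi_2,\lambda_3\phi_3\big),$$ $$r_5=(0,\phi_3,-\phi_2,0,\lambda_2\phi_3,-\lambda_2\phi_2),$$ $$r_6=\big(\tfrac{\lambda_1^2-b}{2\sigma_1},\phi_2,\phi_3,\tfrac{\lambda_1(\lambda_1^2-b)}{2\sigma_1},\lambda_1\phi_2,\lambda_1\phi_3\big).$$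 Left eigenvectors (row vectors): $$l^1=\tfrac1K\big(\tfrac{\lambda_1^2-b}{2\sigma_1},\phi_2,\phi_3,-\tfrac{\lambda_1^2-b}{2\sigma_1\lambda_1},-\tfrac{\phi_2}{\lambda_1},-\tfrac{\phi_3}{\lambda_1}\big),$$ $$l^2=\tfrac1M\big(0,\phi_3,-\phi_2,0,-\tfrac{\phi_3}{\lambda_2},\tfrac{\phi_2}{\lambda_2}\big),$$ $$l^3=\tfrac1N\big(\tfrac{\lambda_3^2-b}{2\sigma_1},\phi_2,\phi_3,-\tfrac{\lambda_3^2-b}{2\sigma_1\lambda_3},-\tfrac{\phi_2}{\lambda_3},-\tfrac{\phi_3}{\lambda_3}\big),$$ $$l^4=\tfrac1N\big(\tfrac{\lambda_3^2-b}{2\sigma_1},\phi_2,\phi_3,\tfrac{\lambda_3^2-b}{2\sigma_1\lambda_3},\tfrac{\phi_2}{\lambda_3},\tfrac{\phi_3}{\lambda_3}\big),$$ $$l^5=\tfrac1M\big(0,\phi_3,-\phi_2,0,\tfrac{\phi_3}{\lambda_2},-\tfrac{\phi_2}{\lambda_2}\big),$$ $$l^6=\tfrac1K\big(\tfrac{\lambda_1^2-b}{2\sigma_1},\phi_2,\phi_3,\tfrac{\lambda_1^2-b}{2\sigma_1\lambda_1},\tfrac{\phi_2}{\lambda_1},\tfrac{\phi_3}{\lambda_1}\big),$$ where $$K=\tfrac{\Delta+(a-b)\sqrt\Delta}{4\sigma_1^2},\qquad M=2(\phi_2^2+\phi_3^2),\qquad N=\tfrac{\Delta-(a-b)\sqrt\Delta}{4\sigma_1^2},$$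 so that $l^ir_j=\delta^i_j$. Coefficients: $c^i_{im}=\nabla_\Phi\lambda_i\cdot r_m$. For vector fields $r,s$ on $\mathbb{R}^6$, let $\nabla_\Phi r\cdot s=\sum_j s_j\,\partial_{\phi_j}r$ denote the derivative of $r$ in direction $s$. For $m\neq i$: $$\gamma^i_{im}=-(\lambda_i-\lambda_m)\,l^i\cdot(\nabla_\Phi r_i\cdot r_m-\nabla_\Phi r_m\cdot r_i).$$ For $k\neq i$ and $m\neq i$: $$\gamma^i_{km}=-(\lambda_k-\lambda_m)\,l^i\cdot(\nabla_\Phi r_k\cdot r_m).$$ These are the coefficients of the wave decomposition $w^i=l^i\partial_x\Phi$: $$(\partial_t+\lambda_i\partial_x)w^i=-c^i_{ii}(w^i)^2+\sum_{m\neq i}(-c^i_{im}+\gamma^i_{im})w^mw^i+\sum_{m\ne i,\,k\ne i,\,m\ne k}\gamma^i_{km}w^kw^m.$$ *)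

From Stdlib Require Import Reals Lra ClassicalEpsilon.
Open Scope R_scope.

(* A point Phi of R^6 is represented as a function nat -> R; only the
   components 1..6 (phi_1,...,phi_6) are ever used. *)
Definition pt := nat -> R.

Definition sum6 (f : nat -> R) : R := f 1%nat + f 2%nat + f 3%nat + f 4%nat + f 5%nat + f 6%nat.

Definition dot6 (u v : pt) : R := sum6 (fun j => u j * v j).

Definition norm6 (P : pt) : R := sqrt (sum6 (fun j => P j ^ 2)).

Definition vec6 (x1 x2 x3 x4 x5 x6 : R) : pt :=
  fun j => match j with
           | 1%nat => x1 | 2%nat => x2 | 3%nat => x3
           | 4%nat => x4 | 5%nat => x5 | 6%nat => x6 | _ => 0 end.

Definition shift (P : pt) (j : nat) (t : R) : pt :=
  fun k => if Nat.eqb k j then P k + t else P k.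

Definition pd (f : pt -> R) (P : pt) (j : nat) : R :=
  epsilon (inhabits 0) (fun l => derivable_pt_lim (fun t => f (shift P j t)) 0 l).

Section Sys.
Variables (c1 c2 s0 s1 : R).

Definition a_ (P : pt) : R := c1 ^ 2 + 2 * s0 * P 1%nat.
Definition b_ (P : pt) : R := c2 ^ 2 + 2 * s1 * P 1%nat.
Definition c_ (P : pt) : R := 2 * s1 * P 2%nat.
Definition d_ (P : pt) : R := 2 * s1 * P 3%nat.
Definition Delta (P : pt) : R :=
  (a_ P - b_ P) ^ 2 + 4 * (c_ P ^ 2 + d_ P ^ 2).

Definition lam1 (P : pt) : R := sqrt ((a_ P + b_ P) / 2 + sqrt (Delta P) / 2).
Definition lam2 (P : pt) : R := sqrt (b_ P).
Definition lam3 (P : pt) : R := sqrt ((a_ P + b_ P) / 2 - sqrt (Delta P) / 2).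

Definition lam (i : nat) (P : pt) : R :=
  match i with
  | 1%nat => lam1 P | 2%nat => lam2 P | 3%nat => lam3 P
  | 4%nat => - lam3 P | 5%nat => - lam2 P | 6%nat => - lam1 P | _ => 0 end.

Definition Kc (P : pt) : R := (Delta P + (a_ P - b_ P) * sqrt (Delta P)) / (4 * s1 ^ 2).
Definition Mc (P : pt) : R := 2 * (P 2%nat ^ 2 + P 3%nat ^ 2).
Definition Nc (P : pt) : R := (Delta P - (a_ P - b_ P) * sqrt (Delta P)) / (4 * s1 ^ 2).

(* right eigenvector of the family with eigenvalue mu = lambda_1 or lambda_3,
   sign e = -1 (for r_1, r_3) or +1 (for r_4, r_6); written with |mu| *)
Definition rA (mu e : R) (P : pt) : pt :=
  let q := (mu ^ 2 - b_ P) / (2 * s1) in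
  vec6 q (P 2%nat) (P 3%nat) (e * mu * q) (e * mu * P 2%nat) (e * mu * P 3%nat).

Definition r (i : nat) (P : pt) : pt :=
  match i with
  | 1%nat => rA (lam1 P) (-1) P
  | 2%nat => vec6 0 (P 3%nat) (- P 2%nat) 0 (- lam2 P * P 3%nat) (lam2 P * P 2%nat)
  | 3%nat => rA (lam3 P) (-1) P
  | 4%nat => rA (lam3 P) 1 P
  | 5%nat => vec6 0 (P 3%nat) (- P 2%nat) 0 (lam2 P * P 3%nat) (- lam2 P * P 2%nat)
  | 6%nat => rA (lam1 P) 1 P
  | _ => fun _ => 0 end.

Definition lA (mu e Z : R) (P : pt) : pt :=
  let q := (mu ^ 2 - b_ P) / (2 * s1) in
  vec6 (q / Z) (P 2%nat / Z) (P 3%nat / Z)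
       (e * (q / mu) / Z) (e * (P 2%nat / mu) / Z) (e * (P 3%nat / mu) / Z).

Definition l (i : nat) (P : pt) : pt :=
  match i with
  | 1%nat => lA (lam1 P) (-1) (Kc P) P
  | 2%nat => vec6 0 (P 3%nat / Mc P) (- P 2%nat / Mc P) 0
                  (- (P 3%nat / lam2 P) / Mc P) ((P 2%nat / lam2 P) / Mc P)
  | 3%nat => lA (lam3 P) (-1) (Nc P) P
  | 4%nat => lA (lam3 P) 1 (Nc P) P
  | 5%nat => vec6 0 (P 3%nat / Mc P) (- P 2%nat / Mc P) 0
                  ((P 3%nat / lam2 P) / Mc P) (- (P 2%nat / lam2 P) / Mc P)
  | 6%nat => lA (lam1 P) 1 (Kc P) P
  | _ => fun _ => 0 end.

Definition dirD (rf sf : pt -> pt) (P : pt) : pt :=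
  fun k => sum6 (fun j => sf P j * pd (fun Q => rf Q k) P j).

Definition ccoef (i m : nat) (P : pt) : R :=
  sum6 (fun j => pd (lam i) P j * r m P j).

Definition gamma (i k m : nat) (P : pt) : R :=
  if Nat.eqb k i then
    - (lam i P - lam m P) *
      dot6 (l i P) (fun n => dirD (r i) (r m) P n - dirD (r m) (r i) P n)
  else
    - (lam k P - lam m P) * dot6 (l i P) (dirD (r k) (r m) P).

End Sys.

(* Everything is invariant under rotations of (phi_2, phi_3): lambda_3 depends only on phi_1
   and rho = phi_2^2 + phi_3^2, the components of r_3 and r_4 have the form
   H(phi_1, rho) (alpha + beta phi_2 + gamma phi_3), and r_2 and r_5 point along the
   rotation field (0, phi_3, -phi_2, ...).  Differentiating along r_2 or r_5 therefore kills
   lambda_3 and merely rotates r_3 and r_4, and the remaining derivatives only involve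
   d lambda_2 / d phi_1 = sigma_1 / lambda_2.  The coefficients then become rational
   expressions in lambda_2, lambda_3 (using b = lambda_2^2): they vanish identically for
   w^1, w^3, w^4, w^6, and for w^2, w^5 they are (lambda_2 - lambda_3) times a factor that
   stays bounded on a small ball, where lambda_2 is bounded below and lambda_3 above. *)

From Pilot Require Import Defs.
From Stdlib Require Import Reals Lra ClassicalEpsilon.
From Coquelicot Require Import Coquelicot.
Open Scope R_scope.

(* [dirD rf sf P k] is definitionally [dderiv (fun Q => rf Q k) (sf P) P]. *)
Definition dderiv (g : pt -> R) (v P : pt) : R := sum6 (fun j => v j * pd g P j).

Definition rho (P : pt) : R := P 2%nat ^ 2 + P 3%nat ^ 2.

Lemma pd_is_derive (f : pt -> R) (P : pt) (j : nat) (l : R) :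
  is_derive (fun t => f (shift P j t)) 0 l -> pd f P j = l.
Proof.
  intros Hl. apply is_derive_Reals in Hl.
  unfold pd. apply (uniqueness_limite (fun t => f (shift P j t)) 0); [|exact Hl].
  apply epsilon_spec. exists l. exact Hl.
Qed.

Lemma pd_of_first_three (f : pt -> R) (F : R -> R -> R -> R) (P : pt) (j : nat) :
  (forall Q, f Q = F (Q 1%nat) (Q 2%nat) (Q 3%nat)) ->
  (j = 4 \/ j = 5 \/ j = 6)%nat -> pd f P j = 0.
Proof.
  intros Hf Hj. apply pd_is_derive.
  apply is_derive_ext with (f := fun _ => f P); [|exact (is_derive_const _ 0)].
  intro t. rewrite !Hf. destruct Hj as [-> | [-> | ->]]; reflexivity.
Qed.

Lemma is_derive_comp_mult (h g m : R -> R) (g0 h' g' m' l : R) :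
  g 0 = g0 -> l = h' * g' * m 0 + h g0 * m' ->
  is_derive h g0 h' -> is_derive g 0 g' -> is_derive m 0 m' ->
  is_derive (fun t => h (g t) * m t) 0 l.
Proof.
  intros <- -> Hh Hg Hm.
  assert (Hhg := is_derive_comp h g 0 h' g' Hh Hg).
  apply (is_derive_ext _ _ _ _ (fun t => eq_refl)).
  replace (h' * g' * m 0 + h (g 0) * m')
    with (plus (mult (scal g' h') (m 0)) (mult (h (g 0)) m')).
  - exact (is_derive_mult _ _ _ _ _ Hhg Hm Rmult_comm).
  - unfold plus, mult, scal; simpl. unfold mult; simpl. ring.
Qed.

Lemma dderiv_rotation_radial (g : pt -> R) (H : R -> R -> R) (al be ga : R) (P v : pt) :
  (forall Q, g Q = H (Q 1%nat) (rho Q) * (al + be * Q 2%nat + ga * Q 3%nat)) ->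
  ex_derive (H (P 1%nat)) (rho P) ->
  v 1%nat = 0 -> v 2%nat = P 3%nat -> v 3%nat = - P 2%nat ->
  dderiv g v P = H (P 1%nat) (rho P) * (be * P 3%nat - ga * P 2%nat).
Proof.
  intros Hg [h' Hh] H1 H2 H3.
  set (m := al + be * P 2%nat + ga * P 3%nat).
  set (h := H (P 1%nat) (rho P)).
  assert (E2 : pd g P 2 = h' * (2 * P 2%nat) * m + h * be).
  { apply pd_is_derive.
    apply (is_derive_ext (fun t => H (P 1%nat) ((P 2%nat + t) ^ 2 + P 3%nat ^ 2)
                                   * (al + be * (P 2%nat + t) + ga * P 3%nat))).
    { intro t. rewrite Hg. reflexivity. }
    apply (is_derive_comp_mult (H (P 1%nat)) (fun t => (P 2%nat + t) ^ 2 + P 3%nat ^ 2)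
             (fun t => al + be * (P 2%nat + t) + ga * P 3%nat) (rho P) h' (2 * P 2%nat) be);
      [unfold rho; ring | unfold m, h; ring | exact Hh | |]; auto_derive; auto; ring. }
  assert (E3 : pd g P 3 = h' * (2 * P 3%nat) * m + h * ga).
  { apply pd_is_derive.
    apply (is_derive_ext (fun t => H (P 1%nat) (P 2%nat ^ 2 + (P 3%nat + t) ^ 2)
                                   * (al + be * P 2%nat + ga * (P 3%nat + t)))).
    { intro t. rewrite Hg. reflexivity. }
    apply (is_derive_comp_mult (H (P 1%nat)) (fun t => P 2%nat ^ 2 + (P 3%nat + t) ^ 2)
             (fun t => al + be * P 2%nat + ga * (P 3%nat + t)) (rho P) h' (2 * P 3%nat) ga);
      [unfold rho; ring | unfold m, h; ring | exact Hh | |]; auto_derive; auto; ring. }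
  assert (E456 : forall j, (j = 4 \/ j = 5 \/ j = 6)%nat -> pd g P j = 0).
  { intros j Hj.
    apply (pd_of_first_three _ (fun x y z => H x (y ^ 2 + z ^ 2) * (al + be * y + ga * z)));
      [exact Hg | exact Hj]. }
  unfold dderiv, sum6. rewrite E2, E3, H1, H2, H3, (E456 4%nat), (E456 5%nat), (E456 6%nat) by auto.
  unfold h. ring.
Qed.

Lemma dderiv_first_affine (g : pt -> R) (K : R -> R) (al be ga k' : R) (P v : pt) :
  (forall Q, g Q = K (Q 1%nat) * (al + be * Q 2%nat + ga * Q 3%nat)) ->
  is_derive K (P 1%nat) k' ->
  dderiv g v P = v 1%nat * (k' * (al + be * P 2%nat + ga * P 3%nat))
                 + v 2%nat * (K (P 1%nat) * be) + v 3%nat * (K (P 1%nat) * ga).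
Proof.
  intros Hg Hk.
  set (m := al + be * P 2%nat + ga * P 3%nat).
  assert (E1 : pd g P 1 = k' * m).
  { apply pd_is_derive.
    apply (is_derive_ext (fun t => K (P 1%nat + t) * m)).
    { intro t. rewrite Hg. reflexivity. }
    apply (is_derive_comp_mult K (fun t => P 1%nat + t) (fun _ => m) (P 1%nat) k' 1 0);
      [ring | ring | exact Hk | |]; auto_derive; auto; ring. }
  assert (E2 : pd g P 2 = K (P 1%nat) * be).
  { apply pd_is_derive.
    apply (is_derive_ext (fun t => K (P 1%nat) * (al + be * (P 2%nat + t) + ga * P 3%nat))).
    { intro t. rewrite Hg. reflexivity. }
    auto_derive; auto; ring. }
  assert (E3 : pd g P 3 = K (P 1%nat) * ga).
  { apply pd_is_derive.
    apply (is_derive_ext (fun t => K (P 1%nat) * (al + be * P 2%nat + ga * (P 3%nat + t)))).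
    { intro t. rewrite Hg. reflexivity. }
    auto_derive; auto; ring. }
  assert (E456 : forall j, (j = 4 \/ j = 5 \/ j = 6)%nat -> pd g P j = 0).
  { intros j Hj.
    apply (pd_of_first_three _ (fun x y z => K x * (al + be * y + ga * z)));
      [exact Hg | exact Hj]. }
  unfold dderiv, sum6.
  rewrite E1, E2, E3, (E456 4%nat), (E456 5%nat), (E456 6%nat) by auto.
  ring.
Qed.

Definition self_factor (L2 L3 : R) : R := L3 / L2 - (L3 ^ 2 - L2 ^ 2) / (4 * L2 ^ 2).

Definition cross_factor (L2 L3 : R) : R :=
  (L3 - L2) / (2 * L2) - (L3 ^ 2 - L2 ^ 2) / (4 * L2 ^ 2).

Section Eigenstructure.
Variables c1 c2 s0 s1 : R.

Definition Delta_rad (x S : R) : R :=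
  (c1 ^ 2 + 2 * s0 * x - (c2 ^ 2 + 2 * s1 * x)) ^ 2 + 16 * s1 ^ 2 * S.

Definition lam3_rad (x S : R) : R :=
  sqrt ((c1 ^ 2 + 2 * s0 * x + (c2 ^ 2 + 2 * s1 * x)) / 2 - sqrt (Delta_rad x S) / 2).

Lemma Delta_radial (P : pt) : Defs.Delta c1 c2 s0 s1 P = Delta_rad (P 1%nat) (rho P).
Proof. unfold Defs.Delta, Delta_rad, a_, b_, c_, d_, rho. ring. Qed.

Lemma lam3_radial (P : pt) : lam3 c1 c2 s0 s1 P = lam3_rad (P 1%nat) (rho P).
Proof. unfold lam3. rewrite Delta_radial. reflexivity. Qed.

Lemma ccoef_dderiv (i m : nat) (P : pt) :
  ccoef c1 c2 s0 s1 i m P = dderiv (lam c1 c2 s0 s1 i) (r c1 c2 s0 s1 m P) P.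
Proof. unfold ccoef, dderiv, sum6. ring. Qed.

(* At such points lambda_2 and lambda_3 are differentiable. *)
Definition regular (P : pt) : Prop :=
  0 < Defs.Delta c1 c2 s0 s1 P /\
  0 < (a_ c1 s0 P + b_ c2 s1 P) / 2 - sqrt (Defs.Delta c1 c2 s0 s1 P) / 2 /\
  0 < b_ c2 s1 P.

Section AtRegularPoint.
Variable P : pt.
Hypothesis HP : regular P.

Lemma lam3_rad_derivable : ex_derive (lam3_rad (P 1%nat)) (rho P).
Proof.
  destruct HP as (HD & HA & _).
  rewrite Delta_radial in HD, HA. unfold a_, b_ in HA. unfold lam3_rad, Delta_rad in *.
  auto_derive. repeat split; auto.
Qed.

Lemma lam2_is_derive (e : R) :
  is_derive (fun x => e * sqrt (c2 ^ 2 + 2 * s1 * x)) (P 1%nat) (e * (s1 / lam2 c2 s1 P)).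
Proof.
  destruct HP as (_ & _ & HB). unfold b_ in HB.
  auto_derive.
  - replace (c2 * (c2 * 1)) with (c2 ^ 2) by ring. exact HB.
  - unfold lam2, b_. replace (c2 * (c2 * 1)) with (c2 ^ 2) by ring.
    field. apply Rgt_not_eq, sqrt_lt_R0. exact HB.
Qed.

Section AlongRotation.
Variable v : pt.
Hypotheses (Hv1 : v 1%nat = 0) (Hv2 : v 2%nat = P 3%nat) (Hv3 : v 3%nat = - P 2%nat).

Lemma dderiv_lam3_rotation (f : pt -> R) (e : R) :
  (forall Q, f Q = e * lam3 c1 c2 s0 s1 Q) -> dderiv f v P = 0.
Proof.
  intros Hf.
  rewrite (dderiv_rotation_radial f (fun x S => e * lam3_rad x S) 1 0 0); auto.
  - ring.
  - intro Q. rewrite Hf, lam3_radial. ring.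
  - destruct lam3_rad_derivable as [l Hl]. exists (e * l).
    apply (is_derive_scal (lam3_rad (P 1%nat))). exact Hl.
Qed.

Lemma dderiv_rA3_rotation (e : R) (n : nat) :
  dderiv (fun Q => rA c2 s1 (lam3 c1 c2 s0 s1 Q) e Q n) v P
  = vec6 0 (P 3%nat) (- P 2%nat) 0 (e * lam3 c1 c2 s0 s1 P * P 3%nat)
         (- (e * lam3 c1 c2 s0 s1 P * P 2%nat)) n.
Proof.
  assert (HL := lam3_rad_derivable).
  set (L := lam3_rad).
  set (q := fun x S => (L x S ^ 2 - (c2 ^ 2 + 2 * s1 * x)) / (2 * s1)).
  (* Each component of [rA] as H(phi_1, rho) (alpha + beta phi_2 + gamma phi_3). *)
  destruct n as [|[|[|[|[|[|[|n]]]]]]];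
  [ rewrite (dderiv_rotation_radial _ (fun _ _ => 0) 0 0 0)
  | rewrite (dderiv_rotation_radial _ q 1 0 0)
  | rewrite (dderiv_rotation_radial _ (fun _ _ => 1) 0 1 0)
  | rewrite (dderiv_rotation_radial _ (fun _ _ => 1) 0 0 1)
  | rewrite (dderiv_rotation_radial _ (fun x S => e * L x S * q x S) 1 0 0)
  | rewrite (dderiv_rotation_radial _ (fun x S => e * L x S) 0 1 0)
  | rewrite (dderiv_rotation_radial _ (fun x S => e * L x S) 0 0 1)
  | rewrite (dderiv_rotation_radial _ (fun _ _ => 0) 0 0 0) ]; auto;
  try (intro Q; unfold rA, vec6, q, L; cbv beta iota zeta; rewrite ?lam3_radial;
       unfold b_; ring; fail);
  try (unfold q, L; auto_derive; repeat split; auto; fail);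
  cbv beta iota zeta delta [vec6]; rewrite ?lam3_radial; unfold L; ring.
Qed.
End AlongRotation.

Lemma dderiv_lam2 (f : pt -> R) (e : R) (v : pt) :
  (forall Q, f Q = e * lam2 c2 s1 Q) -> dderiv f v P = v 1%nat * (e * (s1 / lam2 c2 s1 P)).
Proof.
  intros Hf.
  rewrite (dderiv_first_affine f (fun x => e * sqrt (c2 ^ 2 + 2 * s1 * x)) 1 0 0
             (e * (s1 / lam2 c2 s1 P))).
  - ring.
  - intro Q. rewrite Hf. unfold lam2, b_. ring.
  - apply lam2_is_derive.
Qed.

Lemma dderiv_r2_family (rf : pt -> pt) (e : R) (v : pt) (n : nat) :
  (forall Q k, rf Q k = vec6 0 (Q 3%nat) (- Q 2%nat) 0 (e * lam2 c2 s1 Q * Q 3%nat)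
                             (- (e * lam2 c2 s1 Q * Q 2%nat)) k) ->
  dderiv (fun Q => rf Q n) v P
  = vec6 0 (v 3%nat) (- v 2%nat) 0
      (e * (v 1%nat * (s1 / lam2 c2 s1 P) * P 3%nat + lam2 c2 s1 P * v 3%nat))
      (- (e * (v 1%nat * (s1 / lam2 c2 s1 P) * P 2%nat + lam2 c2 s1 P * v 2%nat))) n.
Proof.
  intros Hrf.
  set (K := fun x => e * sqrt (c2 ^ 2 + 2 * s1 * x)).
  set (k' := e * (s1 / lam2 c2 s1 P)).
  destruct n as [|[|[|[|[|[|[|n]]]]]]];
  [ rewrite (dderiv_first_affine _ (fun _ => 0) 0 0 0 0)
  | rewrite (dderiv_first_affine _ (fun _ => 0) 0 0 0 0)
  | rewrite (dderiv_first_affine _ (fun _ => 1) 0 0 1 0)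
  | rewrite (dderiv_first_affine _ (fun _ => 1) 0 (-1) 0 0)
  | rewrite (dderiv_first_affine _ (fun _ => 0) 0 0 0 0)
  | rewrite (dderiv_first_affine _ K 0 0 1 k')
  | rewrite (dderiv_first_affine _ K 0 (-1) 0 k')
  | rewrite (dderiv_first_affine _ (fun _ => 0) 0 0 0 0) ];
  try (intro Q; rewrite Hrf; unfold vec6, K; unfold lam2, b_; ring);
  try exact (is_derive_const _ _);
  try apply lam2_is_derive;
  cbv beta iota zeta delta [vec6]; unfold K, k', lam2, b_; ring.
Qed.

Lemma dirD_r2 (sf : pt -> pt) (n : nat) :
  dirD (r c1 c2 s0 s1 2) sf P n
  = vec6 0 (sf P 3%nat) (- sf P 2%nat) 0
      (- (sf P 1%nat * (s1 / lam2 c2 s1 P) * P 3%nat + lam2 c2 s1 P * sf P 3%nat))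
      (sf P 1%nat * (s1 / lam2 c2 s1 P) * P 2%nat + lam2 c2 s1 P * sf P 2%nat) n.
Proof.
  unfold dirD. fold (dderiv (fun Q => r c1 c2 s0 s1 2 Q n) (sf P) P).
  rewrite (dderiv_r2_family _ (-1)).
  - destruct n as [|[|[|[|[|[|[|n]]]]]]]; cbv beta iota delta [vec6]; ring.
  - intros Q k. destruct k as [|[|[|[|[|[|[|k]]]]]]]; cbv beta iota delta [r vec6]; ring.
Qed.

Lemma dirD_r5 (sf : pt -> pt) (n : nat) :
  dirD (r c1 c2 s0 s1 5) sf P n
  = vec6 0 (sf P 3%nat) (- sf P 2%nat) 0
      (sf P 1%nat * (s1 / lam2 c2 s1 P) * P 3%nat + lam2 c2 s1 P * sf P 3%nat)
      (- (sf P 1%nat * (s1 / lam2 c2 s1 P) * P 2%nat + lam2 c2 s1 P * sf P 2%nat)) n.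
Proof.
  unfold dirD. fold (dderiv (fun Q => r c1 c2 s0 s1 5 Q n) (sf P) P).
  rewrite (dderiv_r2_family _ 1).
  - destruct n as [|[|[|[|[|[|[|n]]]]]]]; cbv beta iota delta [vec6]; ring.
  - intros Q k. destruct k as [|[|[|[|[|[|[|k]]]]]]]; cbv beta iota delta [r vec6]; ring.
Qed.

Lemma dirD_r3_rotation (sf : pt -> pt) (n : nat) :
  sf P 1%nat = 0 -> sf P 2%nat = P 3%nat -> sf P 3%nat = - P 2%nat ->
  dirD (r c1 c2 s0 s1 3) sf P n
  = vec6 0 (P 3%nat) (- P 2%nat) 0 (- (lam3 c1 c2 s0 s1 P * P 3%nat))
         (lam3 c1 c2 s0 s1 P * P 2%nat) n.
Proof.
  intros H1 H2 H3. unfold dirD.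
  etransitivity; [exact (dderiv_rA3_rotation (sf P) H1 H2 H3 (-1) n) |].
  destruct n as [|[|[|[|[|[|[|n]]]]]]]; cbv beta iota delta [vec6]; ring.
Qed.

Lemma dirD_r4_rotation (sf : pt -> pt) (n : nat) :
  sf P 1%nat = 0 -> sf P 2%nat = P 3%nat -> sf P 3%nat = - P 2%nat ->
  dirD (r c1 c2 s0 s1 4) sf P n
  = vec6 0 (P 3%nat) (- P 2%nat) 0 (lam3 c1 c2 s0 s1 P * P 3%nat)
         (- (lam3 c1 c2 s0 s1 P * P 2%nat)) n.
Proof.
  intros H1 H2 H3. unfold dirD.
  etransitivity; [exact (dderiv_rA3_rotation (sf P) H1 H2 H3 1 n) |].
  destruct n as [|[|[|[|[|[|[|n]]]]]]]; cbv beta iota delta [vec6]; ring.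
Qed.

Lemma ccoef_lam3_rotation :
  ccoef c1 c2 s0 s1 3 2 P = 0 /\ ccoef c1 c2 s0 s1 4 5 P = 0.
Proof.
  rewrite !ccoef_dderiv. split.
  - apply (dderiv_lam3_rotation _ eq_refl eq_refl eq_refl _ 1).
    intro Q. cbv beta iota delta [lam]. ring.
  - apply (dderiv_lam3_rotation _ eq_refl eq_refl eq_refl _ (-1)).
    intro Q. cbv beta iota delta [lam]. ring.
Qed.

Lemma ccoef_lam2 (m : nat) :
  ccoef c1 c2 s0 s1 2 m P = r c1 c2 s0 s1 m P 1%nat * (s1 / lam2 c2 s1 P) /\
  ccoef c1 c2 s0 s1 5 m P = - (r c1 c2 s0 s1 m P 1%nat * (s1 / lam2 c2 s1 P)).
Proof.
  rewrite !ccoef_dderiv. split.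
  - rewrite (dderiv_lam2 _ 1); [ring |].
    intro Q. cbv beta iota delta [lam]. ring.
  - rewrite (dderiv_lam2 _ (-1)); [ring |].
    intro Q. cbv beta iota delta [lam]. ring.
Qed.

Lemma gamma_identities :
  (forall i : nat, (i = 1%nat \/ i = 6%nat) ->
     gamma c1 c2 s0 s1 i 2 3 P + gamma c1 c2 s0 s1 i 3 2 P = 0 /\
     gamma c1 c2 s0 s1 i 4 5 P + gamma c1 c2 s0 s1 i 5 4 P = 0) /\
  (- ccoef c1 c2 s0 s1 3 2 P + gamma c1 c2 s0 s1 3 3 2 P = 0 /\
   gamma c1 c2 s0 s1 3 4 5 P + gamma c1 c2 s0 s1 3 5 4 P = 0) /\
  (- ccoef c1 c2 s0 s1 4 5 P + gamma c1 c2 s0 s1 4 4 5 P = 0 /\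
   gamma c1 c2 s0 s1 4 2 3 P + gamma c1 c2 s0 s1 4 3 2 P = 0).
Proof.
  destruct ccoef_lam3_rotation as [C32 C45].
  assert (D32 := fun n => dirD_r3_rotation (r c1 c2 s0 s1 2) n eq_refl eq_refl eq_refl).
  assert (D45 := fun n => dirD_r4_rotation (r c1 c2 s0 s1 5) n eq_refl eq_refl eq_refl).
  assert (D23 := dirD_r2 (r c1 c2 s0 s1 3)).
  assert (D54 := dirD_r5 (r c1 c2 s0 s1 4)).
  split; [intros i [-> | ->]; split | split; split].
  all: unfold gamma, dot6, sum6; cbv beta iota delta [Nat.eqb];
       rewrite ?C32, ?C45, ?D32, ?D45, ?D23, ?D54;
       cbv beta iota zeta delta [vec6 l lA r rA lam]; unfold Rdiv; ring.
Qed.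

Lemma gamma_w2_w5_factor :
  s1 <> 0 -> rho P > 0 ->
  let L2 := lam2 c2 s1 P in
  let L3 := lam3 c1 c2 s0 s1 P in
  - ccoef c1 c2 s0 s1 2 3 P + gamma c1 c2 s0 s1 2 2 3 P = (L2 - L3) * self_factor L2 L3 /\
  gamma c1 c2 s0 s1 2 4 5 P + gamma c1 c2 s0 s1 2 5 4 P = (L2 - L3) * cross_factor L2 L3 /\
  - ccoef c1 c2 s0 s1 5 4 P + gamma c1 c2 s0 s1 5 5 4 P = - ((L2 - L3) * self_factor L2 L3) /\
  gamma c1 c2 s0 s1 5 2 3 P + gamma c1 c2 s0 s1 5 3 2 P = - ((L2 - L3) * cross_factor L2 L3).
Proof.
  intros Hs1 Hrho L2 L3.
  destruct (ccoef_lam2 3) as [C23 _]. destruct (ccoef_lam2 4) as [_ C54].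
  assert (D32 := fun n => dirD_r3_rotation (r c1 c2 s0 s1 2) n eq_refl eq_refl eq_refl).
  assert (D45 := fun n => dirD_r4_rotation (r c1 c2 s0 s1 5) n eq_refl eq_refl eq_refl).
  assert (D23 := dirD_r2 (r c1 c2 s0 s1 3)).
  assert (D54 := dirD_r5 (r c1 c2 s0 s1 4)).
  destruct HP as (_ & _ & HB).
  assert (HL2 : 0 < L2) by (apply sqrt_lt_R0; exact HB).
  assert (Hb : b_ c2 s1 P = L2 ^ 2) by (unfold L2, lam2; rewrite pow2_sqrt; lra).
  assert (HM : Mc P <> 0) by (unfold Mc, rho in *; lra).
  unfold self_factor, cross_factor.
  repeat split;
    unfold gamma, dot6, sum6; cbv beta iota delta [Nat.eqb];
    rewrite ?C23, ?C54, ?D32, ?D45, ?D23, ?D54;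
    cbv beta iota zeta delta [vec6 l lA r rA lam]; fold L2 L3; rewrite Hb;
    unfold Mc in *; field; repeat split; lra.
Qed.

End AtRegularPoint.
End Eigenstructure.

Definition factor_bound (U T : R) : R := (U + T) / 2 + 1 + U * T.

Lemma factors_bounded (L2 L3 U T : R) :
  0 < L2 -> L3 ^ 2 <= U -> (/ L2) ^ 2 <= T ->
  Rabs (self_factor L2 L3) <= factor_bound U T /\
  Rabs (cross_factor L2 L3) <= factor_bound U T.
Proof.
  intros HL2 HU HT. unfold factor_bound.
  set (t := / L2) in *.
  assert (Eself : self_factor L2 L3 = L3 * t - ((L3 * t) ^ 2 - 1) / 4)
    by (unfold self_factor, t; field; lra).
  assert (Ecross : cross_factor L2 L3 = L3 * t / 2 - 1 / 2 - ((L3 * t) ^ 2 - 1) / 4)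
    by (unfold cross_factor, t; field; lra).
  (* AM-GM: |L3 t| <= (L3^2 + t^2) / 2 *)
  assert (Hamgm : Rabs (L3 * t) <= (U + T) / 2).
  { assert (Hm := pow2_ge_0 (L3 - t)). assert (Hp := pow2_ge_0 (L3 + t)).
    apply Rabs_le_between. split; nra. }
  assert (Hsq : (L3 * t) ^ 2 <= U * T).
  { rewrite Rpow_mult_distr. apply Rmult_le_compat; auto using pow2_ge_0. }
  assert (H0 := pow2_ge_0 (L3 * t)).
  apply Rabs_le_between in Hamgm.
  rewrite Eself, Ecross. split; apply Rabs_le_between; split; lra.
Qed.

Lemma first_coords_le_norm6 (P : pt) : P 1%nat ^ 2 + rho P <= norm6 P ^ 2.
Proof.
  unfold norm6, rho.
  assert (Hs : 0 <= sum6 (fun j => P j ^ 2)).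
  { unfold sum6. repeat apply Rplus_le_le_0_compat; apply pow2_ge_0. }
  rewrite pow2_sqrt by exact Hs. unfold sum6.
  assert (H4 := pow2_ge_0 (P 4%nat)). assert (H5 := pow2_ge_0 (P 5%nat)).
  assert (H6 := pow2_ge_0 (P 6%nat)). lra.
Qed.

Lemma sqrt_discriminant_lt (A B E : R) :
  0 < A -> 0 < B -> 0 <= E < 4 * A * B -> sqrt ((A - B) ^ 2 + E) < A + B.
Proof.
  intros HA HB HE.
  rewrite <- (sqrt_pow2 (A + B)) by lra.
  assert (H := pow2_ge_0 (A - B)).
  apply sqrt_lt_1; [lra | apply pow2_ge_0 | nra].
Qed.

Definition ball_radius (c2 s0 s1 : R) : R := c2 ^ 2 / (8 * (Rabs s0 + Rabs s1 + 1)).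

Lemma ball_radius_pos (c2 s0 s1 : R) : c2 > 0 -> 0 < ball_radius c2 s0 s1.
Proof.
  intros Hc2. unfold ball_radius.
  assert (H0 := Rabs_pos s0). assert (H1 := Rabs_pos s1).
  apply Rdiv_lt_0_compat; [apply pow_lt | ]; lra.
Qed.

Section SmallBall.
Variables c1 c2 s0 s1 delta : R.
Hypotheses (Hc12 : c1 > c2) (Hc2 : c2 > 0) (Hs1 : s1 <> 0)
           (Hdelta : 0 < delta < ball_radius c2 s0 s1).
Variable P : pt.
Hypotheses (HP : norm6 P < 2 * delta) (Hrho : rho P > 0).

Let x := P 1%nat.
Let A := c1 ^ 2 + 2 * s0 * x.
Let B := c2 ^ 2 + 2 * s1 * x.

Lemma small_ball_bounds :
  c2 ^ 2 / 2 < A < c1 ^ 2 + c2 ^ 2 / 2 /\ c2 ^ 2 / 2 < B < 3 * c2 ^ 2 / 2 /\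
  16 * s1 ^ 2 * rho P < c2 ^ 4.
Proof.
  set (m := Rabs s0 + Rabs s1 + 1).
  assert (Hm0 : Rabs s0 <= m) by (unfold m; assert (H := Rabs_pos s1); lra).
  assert (Hm1 : Rabs s1 <= m) by (unfold m; assert (H := Rabs_pos s0); lra).
  assert (Hm : 0 < m) by (unfold m; assert (H := Rabs_pos s0); assert (H' := Rabs_pos s1); lra).
  assert (Hsmall : m * delta < c2 ^ 2 / 8).
  { destruct Hdelta as [_ Hd]. unfold ball_radius in Hd. fold m in Hd.
    apply (Rmult_lt_compat_l m) in Hd; [| exact Hm].
    replace (m * (c2 ^ 2 / (8 * m))) with (c2 ^ 2 / 8) in Hd by (field; lra). exact Hd. }
  assert (Hball : x ^ 2 + rho P < (2 * delta) ^ 2).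
  { assert (Hnorm := first_coords_le_norm6 P).
    assert (Hn0 : 0 <= norm6 P) by apply sqrt_pos. unfold x. nra. }
  assert (Hx : Rabs x < 2 * delta) by (apply Rabs_def1; nra).
  assert (Hsx : forall s, Rabs s <= m -> Rabs (2 * s * x) < c2 ^ 2 / 2).
  { intros s Hs. rewrite !Rabs_mult, (Rabs_pos_eq 2) by lra.
    assert (Rabs s * Rabs x <= m * Rabs x)
      by (apply Rmult_le_compat_r; [apply Rabs_pos | exact Hs]).
    assert (m * Rabs x < m * (2 * delta)) by (apply Rmult_lt_compat_l; assumption).
    lra. }
  assert (Hs0x := Rabs_def2 _ _ (Hsx s0 Hm0)). assert (Hs1x := Rabs_def2 _ _ (Hsx s1 Hm1)).
  assert (Hc : c2 ^ 2 < c1 ^ 2) by nra.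
  unfold A, B. repeat split; try lra.
  assert (Hs1sq : s1 ^ 2 <= m ^ 2)
    by (rewrite <- (pow2_abs s1); assert (H := Rabs_pos s1); nra).
  assert (Hx2 := pow2_ge_0 x).
  assert (s1 ^ 2 * rho P <= m ^ 2 * (2 * delta) ^ 2).
  { apply Rmult_le_compat; [apply pow2_ge_0 | lra | lra | lra]. }
  assert (Hmd : 0 < m * delta) by (apply Rmult_lt_0_compat; lra).
  assert ((m * delta) ^ 2 < (c2 ^ 2 / 8) ^ 2) by nra.
  nra.
Qed.
Lemma small_ball_regular :
  regular c1 c2 s0 s1 P /\ lam3 c1 c2 s0 s1 P ^ 2 <= c1 ^ 2 + c2 ^ 2 /\
  (/ lam2 c2 s1 P) ^ 2 <= 2 / c2 ^ 2.
Proof.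
  destruct small_ball_bounds as (HA & HB & HE).
  assert (Hs1sq : 0 < s1 ^ 2) by (apply pow2_gt_0; exact Hs1).
  assert (Hc2sq : 0 < c2 ^ 2) by (apply pow_lt; exact Hc2).
  assert (HDelta : Defs.Delta c1 c2 s0 s1 P = (A - B) ^ 2 + 16 * s1 ^ 2 * rho P).
  { rewrite Delta_radial. reflexivity. }
  assert (HDpos : 0 < Defs.Delta c1 c2 s0 s1 P).
  { rewrite HDelta. assert (H := pow2_ge_0 (A - B)). nra. }
  assert (Hsqrt : sqrt (Defs.Delta c1 c2 s0 s1 P) < A + B).
  { rewrite HDelta. apply sqrt_discriminant_lt; try lra. split; nra. }
  assert (Hrad : 0 < (A + B) / 2 - sqrt (Defs.Delta c1 c2 s0 s1 P) / 2) by lra.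
  split; [|split].
  - unfold regular, a_, b_. fold x. fold A B. lra.
  - unfold lam3, a_, b_. fold x A B. rewrite pow2_sqrt by lra.
    assert (H := sqrt_pos (Defs.Delta c1 c2 s0 s1 P)). assert (H' := pow2_ge_0 c1). lra.
  - unfold lam2, b_. fold x B.
    rewrite pow_inv, pow2_sqrt by lra.
    replace (2 / c2 ^ 2) with (/ (c2 ^ 2 / 2)) by (field; lra).
    apply Rlt_le, Rinv_lt_contravar; [apply Rmult_lt_0_compat |]; lra.
Qed.

Lemma small_ball_gamma_bounds :
  let C := factor_bound (c1 ^ 2 + c2 ^ 2) (2 / c2 ^ 2) in
  let D := Rabs (lam c1 c2 s0 s1 2 P - lam c1 c2 s0 s1 3 P) in
  Rabs (- ccoef c1 c2 s0 s1 2 3 P + gamma c1 c2 s0 s1 2 2 3 P) <= C * D /\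
  Rabs (gamma c1 c2 s0 s1 2 4 5 P + gamma c1 c2 s0 s1 2 5 4 P) <= C * D /\
  Rabs (- ccoef c1 c2 s0 s1 5 4 P + gamma c1 c2 s0 s1 5 5 4 P) <= C * D /\
  Rabs (gamma c1 c2 s0 s1 5 2 3 P + gamma c1 c2 s0 s1 5 3 2 P) <= C * D.
Proof.
  intros C D.
  destruct small_ball_regular as (HPr & HU & HT).
  assert (HL2 : 0 < lam2 c2 s1 P) by (apply sqrt_lt_R0; apply HPr).
  destruct (factors_bounded _ _ _ _ HL2 HU HT) as [Bself Bcross].
  destruct (gamma_w2_w5_factor c1 c2 s0 s1 P HPr Hs1 Hrho) as (E1 & E2 & E3 & E4).
  assert (Hfac : forall X, Rabs X <= C ->
            Rabs ((lam2 c2 s1 P - lam3 c1 c2 s0 s1 P) * X) <= C * D).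
  { intros X HX. unfold D. cbv beta iota delta [lam].
    rewrite Rabs_mult, Rmult_comm. apply Rmult_le_compat_r; [apply Rabs_pos | exact HX]. }
  rewrite E1, E2, E3, E4, !Rabs_Ropp. auto.
Qed.

End SmallBall.

Theorem proposition3p2 (c1 c2 s0 s1 : R) :
  c1 > c2 -> c2 > 0 -> s0 * s1 <> 0 ->
  exists delta0 : R, 0 < delta0 /\
  forall delta : R, 0 < delta < delta0 ->
  (forall P : pt, norm6 P < 2 * delta -> P 2%nat ^ 2 + P 3%nat ^ 2 > 0 ->
     (forall i : nat, (i = 1%nat \/ i = 6%nat) ->
        gamma c1 c2 s0 s1 i 2 3 P + gamma c1 c2 s0 s1 i 3 2 P = 0 /\
        gamma c1 c2 s0 s1 i 4 5 P + gamma c1 c2 s0 s1 i 5 4 P = 0) /\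
     (- ccoef c1 c2 s0 s1 3 2 P + gamma c1 c2 s0 s1 3 3 2 P = 0 /\
      gamma c1 c2 s0 s1 3 4 5 P + gamma c1 c2 s0 s1 3 5 4 P = 0) /\
     (- ccoef c1 c2 s0 s1 4 5 P + gamma c1 c2 s0 s1 4 4 5 P = 0 /\
      gamma c1 c2 s0 s1 4 2 3 P + gamma c1 c2 s0 s1 4 3 2 P = 0)) /\
  (exists C : R, forall P : pt, norm6 P < 2 * delta -> P 2%nat ^ 2 + P 3%nat ^ 2 > 0 ->
     let D := Rabs (lam c1 c2 s0 s1 2 P - lam c1 c2 s0 s1 3 P) in
     Rabs (- ccoef c1 c2 s0 s1 2 3 P + gamma c1 c2 s0 s1 2 2 3 P) <= C * D /\
     Rabs (gamma c1 c2 s0 s1 2 4 5 P + gamma c1 c2 s0 s1 2 5 4 P) <= C * D /\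
     Rabs (- ccoef c1 c2 s0 s1 5 4 P + gamma c1 c2 s0 s1 5 5 4 P) <= C * D /\
     Rabs (gamma c1 c2 s0 s1 5 2 3 P + gamma c1 c2 s0 s1 5 3 2 P) <= C * D).
Proof.
  intros Hc12 Hc2 Hs.
  assert (Hs1 : s1 <> 0) by (intro E; apply Hs; rewrite E; ring).
  exists (ball_radius c2 s0 s1). split; [exact (ball_radius_pos c2 s0 s1 Hc2) |].
  intros delta Hdelta. split.
  - intros P HP Hrho. apply gamma_identities.
    exact (proj1 (small_ball_regular c1 c2 s0 s1 delta Hc12 Hc2 Hs1 Hdelta P HP Hrho)).
  - exists (factor_bound (c1 ^ 2 + c2 ^ 2) (2 / c2 ^ 2)).
    intros P HP Hrho. exact (small_ball_gamma_bounds c1 c2 s0 s1 delta Hc12 Hc2 Hs1 Hdelta P HP Hrho).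
Qed.
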